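(* Let $R$ be a local ring and $M$ an $R$-module. Then $\mathcal M^*$ is dually separated if and only if $M$ is the direct limit of its finitely generated free submodules that are direct summands of $M$, i.e. the family of finitely generated free submodules $L\subseteq M$ that are direct summands of $M$ is upward directed (under inclusion) and its union is $M$.
   Context: An $\mathcal R$-module is a covariant functor $\mathbb M$ from commutative $R$-algebras to abelian groups with each $\mathbb M(S)$ an $S$-module, functorially; morphisms are natural transformations $S$-linear on each $S$. For an $R$-module $M$, $\mathcal M(S)=M\otimes_RS$ and $\mathcal M^*(S)=\operatorname{Hom}_S(M\otimes_RS,S)$; generally $\mathbb M^*(S)=\operatorname{Hom}_{\mathcal S}(\mathbb M_{|S},\mathcal S)$ with $\mathbb M_{|S}$ restriction to $S$-algebras. An $\mathcal R$-module $\mathbb M$ is dually separated if for every commutative $R$-algebra $S$ the map $\mathbb M^*(S)\to\operatorname{Hom}_R(\mathbb M(R),S)$, $w\mapsto w_R$, is injective. *)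

From HB Require Import structures.
From mathcomp Require Import all_boot all_order all_algebra.
Set Implicit Arguments. Unset Strict Implicit. Unset Printing Implicit Defensive.
Import GRing.Theory.
Local Open Scope ring_scope.

(* A (commutative) local ring: the non-units form an additively closed set
   (equivalently, the non-units form the unique maximal ideal). *)
Definition local_ring (R : comUnitRingType) : Prop :=
  forall x y : R, x \isn't a GRing.unit -> y \isn't a GRing.unit ->
    x + y \isn't a GRing.unit.

Section Duals.
Variables (R : comUnitRingType) (M : lmodType R).

(* An element of Mdual(T) = Hom_T(M (x)_R T, T) is identified with
   an R-linear map w : M -> T, i.e. with [islin f w]. *)
Definition islin (T : comPzRingType) (f : R -> T) (w : M -> T) : Prop :=
  (forall x y : M, w (x + y) = w x + w y) /\
  (forall (r : R) (x : M), w (r *: x) = f r * w x).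

(* Candidate elements of Mdual^dual(S), for the R-algebra (S, fS): a family,
   indexed by the S-algebras (T, g : S -> T), of maps Mdual(T) -> T.  It is
   given as a function on all maps M -> T; only its values on R-linear maps
   (elements of Mdual(T)) matter. *)
Definition dual_family (S : comPzRingType) : Type :=
  forall (T : comPzRingType) (g : {rmorphism S -> T}), (M -> T) -> T.

(* [phi] is a morphism of S-module functors Mdual_{|S} -> S-functor:
   T-linear on each Mdual(T), and natural in S-algebra morphisms. *)
Definition is_dual_nat (S : comPzRingType) (fS : {rmorphism R -> S})
    (phi : dual_family S) : Prop :=
  (forall (T : comPzRingType) (g : {rmorphism S -> T}) (w1 w2 : M -> T),
      islin (g \o fS) w1 -> islin (g \o fS) w2 ->
      phi T g (fun m => w1 m + w2 m) = phi T g w1 + phi T g w2) /\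
  (forall (T : comPzRingType) (g : {rmorphism S -> T}) (t : T) (w : M -> T),
      islin (g \o fS) w ->
      phi T g (fun m => t * w m) = t * phi T g w) /\
  (forall (T T' : comPzRingType) (g : {rmorphism S -> T})
          (g' : {rmorphism S -> T'}) (h : {rmorphism T -> T'}) (w : M -> T),
      (forall s, h (g s) = g' s) ->
      islin (g \o fS) w ->
      phi T' g' (h \o w) = h (phi T g w)).

Definition dual_nat_eq (S : comPzRingType) (fS : {rmorphism R -> S})
    (phi psi : dual_family S) : Prop :=
  forall (T : comPzRingType) (g : {rmorphism S -> T}) (w : M -> T),
    islin (g \o fS) w -> phi T g w = psi T g w.

(* The functor Mdual is dually separated: for every commutative R-algebra S,
   the map Mdual^dual(S) -> Hom_R(Mdual(R), S), w |-> w_R, is injective; here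
   w_R(u) = w_S(u (x) 1) and u (x) 1 corresponds to fS \o u. *)
Definition dual_dually_separated : Prop :=
  forall (S : comPzRingType) (fS : {rmorphism R -> S}) (phi psi : dual_family S),
    is_dual_nat fS phi -> is_dual_nat fS psi ->
    (forall u : M -> R, islin idfun u ->
       phi S idfun (fS \o u) = psi S idfun (fS \o u)) ->
    dual_nat_eq fS phi psi.

Definition submodule (L : M -> Prop) : Prop :=
  L 0 /\ forall (a : R) (u v : M), L u -> L v -> L (a *: u + v).

Definition fg_free_submodule (L : M -> Prop) : Prop :=
  submodule L /\
  exists (n : nat) (e : 'I_n -> M),
    (forall x, L x <-> exists c : 'I_n -> R, x = \sum_(i < n) c i *: e i) /\
    (forall c : 'I_n -> R, \sum_(i < n) c i *: e i = 0 -> forall i, c i = 0).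

Definition direct_summand (L : M -> Prop) : Prop :=
  submodule L /\
  exists L' : M -> Prop, submodule L' /\
    (forall x, L x -> L' x -> x = 0) /\
    (forall x, exists y z, L y /\ L' z /\ x = y + z).

Definition fgfree_summand (L : M -> Prop) : Prop :=
  fg_free_submodule L /\ direct_summand L.

Definition dirlim_fgfree_summands : Prop :=
  (forall L1 L2, fgfree_summand L1 -> fgfree_summand L2 ->
     exists L3, fgfree_summand L3 /\
       (forall x, L1 x -> L3 x) /\ (forall x, L2 x -> L3 x)) /\
  (forall x : M, exists L, fgfree_summand L /\ L x).

End Duals.

(* (<-) A natural transformation phi on the dual functor is finitely supported:
   naturality along evaluation out of the ring of finitely determined functions
   on M^*(T) shows that phi_T(w) only depends on finitely many values of w.  They
   lie in a finitely generated free summand with basis e and coordinate forms v,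
   and replacing w by its composite with the projection onto that summand gives
   phi_T(w) = sum_i w(e_i) g(phi_S(fS o v_i)), which only involves R-points.
   (->) Given x_1, ..., x_k, apply separation to phi = sum_i s_i w(x_i) over the
   ring generated by symbols s_i and a copy of M, with all products of two s's
   or of two elements of M set to 0, modulo the ideal generated by the elements
   sum_i u(x_i) s_i for linear forms u.  That phi vanishes there says that (x_i)
   is fixed by a finite-rank endomorphism sum_j u_j(-) y_j.  Over a local ring,
   if some combination of the y_j with a unit coefficient c_j takes non-unit
   values under every form, then y_j can be eliminated; once this is no longer
   possible, the y_j span the same submodule as a biorthogonal system, and that
   span is a finitely generated free summand containing the x_i. *)

From HB Require Import structures.
From mathcomp Require Import all_boot all_order all_algebra.
From mathcomp Require Import boolp.
Set Implicit Arguments. Unset Strict Implicit. Unset Printing Implicit Defensive.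
Import GRing.Theory.
Local Open Scope ring_scope.
Local Open Scope quotient_scope.

(** * Linear forms, spans and biorthogonal systems *)

Section LinearMaps.
Variables (R : comUnitRingType) (M : lmodType R) (T : comPzRingType) (f : R -> T).
Implicit Types (w : M -> T) (x y : M).

Lemma islinD w : islin f w -> {morph w : x y / x + y}.
Proof. by case. Qed.

Lemma islinZ w r x : islin f w -> w (r *: x) = f r * w x.
Proof. by case=> _ ->. Qed.

Lemma islin0 w : islin f w -> w 0 = 0.
Proof. by move=> hw; apply: (@addrI _ (w 0)); rewrite -islinD // !addr0. Qed.

Lemma islinN w x : islin f w -> w (- x) = - w x.
Proof. by move=> hw; apply/eqP; rewrite -addr_eq0 addrC -islinD // subrr islin0. Qed.

Lemma islinB w x y : islin f w -> w (x - y) = w x - w y.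
Proof. by move=> hw; rewrite islinD // islinN. Qed.

Lemma islin_sum w n (c : 'I_n -> R) (e : 'I_n -> M) : islin f w ->
  w (\sum_(i < n) c i *: e i) = \sum_(i < n) f (c i) * w (e i).
Proof.
move=> hw; elim: n c e => [|n IH] c e; first by rewrite !big_ord0 islin0.
by rewrite !big_ord_recr /= islinD // islinZ // IH.
Qed.

Lemma islin_addf w1 w2 : islin f w1 -> islin f w2 -> islin f (fun m => w1 m + w2 m).
Proof.
move=> h1 h2; split=> [x y|r x]; first by rewrite !islinD // addrACA.
by rewrite !islinZ // mulrDr.
Qed.

Lemma islin_mulf (t : T) w : islin f w -> islin f (fun m => t * w m).
Proof.
move=> hw; split=> [x y|r x]; first by rewrite islinD // mulrDr.
by rewrite islinZ // mulrCA.
Qed.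

Lemma islin_oppf w : islin f w -> islin f (fun m => - w m).
Proof.
move=> hw; split=> [x y|r x]; first by rewrite islinD // opprD.
by rewrite islinZ // mulrN.
Qed.

Lemma islin_sumf n (F : 'I_n -> M -> T) : (forall i, islin f (F i)) ->
  islin f (fun m => \sum_(i < n) F i m).
Proof.
move=> hF; split=> [x y|r x].
  by rewrite -big_split; apply: eq_bigr => i _; rewrite islinD.
by rewrite mulr_sumr; apply: eq_bigr => i _; rewrite islinZ.
Qed.

Lemma islin_rmorph (T' : comPzRingType) (h : {rmorphism T -> T'}) w :
  islin f w -> islin (h \o f) (h \o w).
Proof.
by move=> hw; split=> [x y|r x] /=; [rewrite islinD // rmorphD | rewrite islinZ // rmorphM].
Qed.

End LinearMaps.

Notation lform u := (islin idfun u).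

Section Submodules.
Variables (R : comUnitRingType) (M : lmodType R) (L : M -> Prop).
Hypothesis sL : submodule L.

Lemma submodule0 : L 0. Proof. by case: sL. Qed.

Lemma submoduleD u v : L u -> L v -> L (u + v).
Proof. by case: sL => _ H Lu Lv; have := H 1 u v Lu Lv; rewrite scale1r. Qed.

Lemma submoduleZ a u : L u -> L (a *: u).
Proof. by case: sL => H0 H Lu; have := H a u 0 Lu H0; rewrite addr0. Qed.

Lemma submoduleB u v : L u -> L v -> L (u - v).
Proof. by move=> Lu Lv; rewrite -scaleN1r addrC; case: sL => _; apply. Qed.

Lemma submodule_sum n (c : 'I_n -> R) (e : 'I_n -> M) :
  (forall i, L (e i)) -> L (\sum_(i < n) c i *: e i).
Proof.
elim: n c e => [|n IH] c e he; first by rewrite big_ord0; apply: submodule0.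
by rewrite big_ord_recr /=; apply: submoduleD; [apply: IH | apply: submoduleZ].
Qed.

End Submodules.

Section Span.
Variables (R : comUnitRingType) (M : lmodType R).

Definition lin_span n (e : 'I_n -> M) (x : M) : Prop :=
  exists c : 'I_n -> R, x = \sum_(i < n) c i *: e i.

Lemma lin_span_submodule n (e : 'I_n -> M) : submodule (lin_span e).
Proof.
split; first by exists (fun _ => 0); rewrite big1 // => i _; rewrite scale0r.
move=> a u v [c ->] [d ->]; exists (fun i => a * c i + d i).
by rewrite scaler_sumr -big_split; apply: eq_bigr => i _; rewrite scalerDl scalerA.
Qed.

Lemma lin_span_gen n (e : 'I_n -> M) i : lin_span e (e i).
Proof.
exists (fun j => (i == j)%:R); rewrite (bigD1 i) //= eqxx scale1r big1 ?addr0 //.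
by move=> j; rewrite eq_sym => /negbTE->; rewrite scale0r.
Qed.

Lemma lin_span_min n (e : 'I_n -> M) (L : M -> Prop) x :
  submodule L -> (forall i, L (e i)) -> lin_span e x -> L x.
Proof. by move=> sL he [c ->]; apply: submodule_sum. Qed.

End Span.

Definition ocons (T : Type) n (x : T) (f : 'I_n -> T) (i : 'I_n.+1) : T :=
  if unlift ord0 i is Some j then f j else x.

Lemma ocons0 (T : Type) n (x : T) (f : 'I_n -> T) : ocons x f ord0 = x.
Proof. by rewrite /ocons unlift_none. Qed.

Lemma oconsS (T : Type) n (x : T) (f : 'I_n -> T) j : ocons x f (lift ord0 j) = f j.
Proof. by rewrite /ocons liftK. Qed.

Definition fcat (T : Type) m n (f : 'I_m -> T) (g : 'I_n -> T) (i : 'I_(m + n)) : T :=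
  match split i with inl a => f a | inr b => g b end.

Lemma fcat_lshift (T : Type) m n (f : 'I_m -> T) (g : 'I_n -> T) i :
  fcat f g (lshift n i) = f i.
Proof. by rewrite /fcat (unsplitK (inl i)). Qed.

Lemma fcat_rshift (T : Type) m n (f : 'I_m -> T) (g : 'I_n -> T) i :
  fcat f g (rshift m i) = g i.
Proof. by rewrite /fcat (unsplitK (inr i)). Qed.

Lemma ffunDE (aT : finType) (V : nmodType) (f g : {ffun aT -> V}) x :
  (f + g) x = f x + g x.
Proof. by rewrite /GRing.add /= ffunE. Qed.

Lemma ffunZE (aT : finType) (A : pzRingType) (V : lmodType A) a (f : {ffun aT -> V}) x :
  (a *: f) x = a *: f x.
Proof. by rewrite /GRing.scale /= ffunE. Qed.

Section Biorthogonal.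
Variables (R : comUnitRingType) (M : lmodType R).

(* Over a local ring this says that [c |-> \sum_i c i *: y i] is a split
   embedding [R^n -> M]. *)
Definition unit_detected n (y : 'I_n -> M) : Prop :=
  forall c : 'I_n -> R, (exists j, c j \is a GRing.unit) ->
  exists u, lform u /\ u (\sum_(i < n) c i *: y i) \is a GRing.unit.

Definition biorthogonal n (v : 'I_n -> M -> R) (e : 'I_n -> M) : Prop :=
  (forall i, lform (v i)) /\ forall i j, v i (e j) = (i == j)%:R.

Lemma biorthogonal_coord n (v : 'I_n -> M -> R) e (c : 'I_n -> R) j :
  biorthogonal v e -> v j (\sum_(i < n) c i *: e i) = c j.
Proof.
case=> lv ve; rewrite (islin_sum _ _ (lv j)) (bigD1 j) //= ve eqxx mulr1 big1 ?addr0 //.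
by move=> i; rewrite ve eq_sym => /negbTE->; rewrite mulr0.
Qed.

Lemma biorthogonal_fgfree_summand n (v : 'I_n -> M -> R) e :
  biorthogonal v e -> fgfree_summand (lin_span e).
Proof.
move=> bve; have [lv _] := bve; have se := lin_span_submodule e.
split; split => //.
  exists n, e; split => // c hc i.
  by rewrite -(biorthogonal_coord c i bve) hc (islin0 (lv i)).
exists (fun x => forall j, v j x = 0); split; [split|split].
- by move=> j; rewrite (islin0 (lv j)).
- by move=> a x y hx hy j; rewrite (islinD (lv j)) (islinZ _ _ (lv j)) hx hy mulr0 addr0.
- move=> x [c ->] hx; rewrite big1 // => i _.
  by rewrite -(biorthogonal_coord c i bve) hx scale0r.
- move=> x; exists (\sum_(i < n) v i x *: e i), (x - \sum_(i < n) v i x *: e i).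
  split; first by exists (fun i => v i x).
  split; last by rewrite addrC subrK.
  by move=> j; rewrite (islinB _ _ (lv j)) biorthogonal_coord // subrr.
Qed.

Lemma unit_detected_head_form n (y : 'I_n.+1 -> M) :
  unit_detected y -> exists v, lform v /\ v (y ord0) = 1.
Proof.
move=> hy; have [|u [lu]] := hy (fun i => (i == ord0)%:R).
  by exists ord0; rewrite eqxx unitr1.
rewrite (bigD1 ord0) //= big1 => [|i /negbTE->]; last by rewrite scale0r.
rewrite scale1r addr0 => uy0.
by exists (fun m => (u (y ord0))^-1 * u m); split; [apply: islin_mulf | rewrite mulVr].
Qed.

Lemma unit_detected_shift n (y : 'I_n.+1 -> M) v : lform v -> v (y ord0) = 1 ->
  unit_detected y ->
  unit_detected (fun i => y (lift ord0 i) - v (y (lift ord0 i)) *: y ord0).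
Proof.
move=> lv vy0 hy c [j cj].
pose c0 := - \sum_(i < n) c i * v (y (lift ord0 i)).
have [|u [lu hu]] := hy (ocons c0 c); first by exists (lift ord0 j); rewrite oconsS.
exists u; split => //; move: hu; congr (u _ \is a _).
rewrite big_ord_recl ocons0; under eq_bigr do rewrite oconsS.
under [RHS]eq_bigr do rewrite scalerBr scalerA.
by rewrite sumrB /c0 scaleNr -scaler_suml addrC.
Qed.

Lemma biorthogonal_cons n (v' : 'I_n -> M -> R) e' v y0 :
  biorthogonal v' e' -> lform v -> v y0 = 1 -> (forall j, v (e' j) = 0) ->
  biorthogonal (ocons v (fun i m => v' i m - v' i y0 * v m)) (ocons y0 e').
Proof.
move=> [lv' ve'] lv vy0 ve'0; split.
  move=> i; case: (unliftP ord0 i) => [i'|] ->; rewrite ?oconsS ?ocons0 //.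
  by apply: islin_addf => //; apply/islin_oppf/islin_mulf.
move=> i j; case: (unliftP ord0 i) => [i'|] ->; case: (unliftP ord0 j) => [j'|] ->;
  rewrite ?oconsS ?ocons0.
- by rewrite ve' ve'0 mulr0 subr0 (inj_eq (@lift_inj _ ord0)).
- by rewrite vy0 mulr1 subrr eq_sym (negbTE (neq_lift _ _)).
- by rewrite ve'0 (negbTE (neq_lift _ _)).
- by rewrite vy0 eqxx.
Qed.

Lemma unit_detected_biorthogonal n (y : 'I_n -> M) : unit_detected y ->
  exists (v : 'I_n -> M -> R) (e : 'I_n -> M), biorthogonal v e /\
    (forall i, lin_span e (y i)) /\ (forall i, lin_span y (e i)).
Proof.
elim: n y => [|n IH] y hy.
  by exists (fun _ _ => 0), (fun _ => 0); split; [split|split]; case.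
have [v [lv vy0]] := unit_detected_head_form hy.
pose y' i := y (lift ord0 i) - v (y (lift ord0 i)) *: y ord0.
have hy' : unit_detected y' := unit_detected_shift lv vy0 hy.
have [v' [e' [bve' [y'e' e'y']]]] := IH y' hy'.
have ve'0 j : v (e' j) = 0.
  apply: (lin_span_min (L := fun x => v x = 0)) (e'y' j) => [|i].
    split=> [|a x z hx hz]; first exact: islin0 lv.
    by rewrite (islinD lv) (islinZ _ _ lv) hx hz mulr0 addr0.
  by rewrite (islinB _ _ lv) (islinZ _ _ lv) vy0 mulr1 subrr.
set e := ocons (y ord0) e'.
exists (ocons v (fun i m => v' i m - v' i (y ord0) * v m)), e.
split; first exact: biorthogonal_cons.
have se := lin_span_submodule e.
have ye0 : lin_span e (y ord0) by rewrite -(ocons0 (y ord0) e'); apply: lin_span_gen.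
split=> i; case: (unliftP ord0 i) => [i'|] -> //.
- rewrite -[y (lift ord0 i')](subrK (v (y (lift ord0 i')) *: y ord0)).
  apply: (submoduleD se); last exact: submoduleZ.
  apply: lin_span_min se _ (y'e' i') => j; rewrite -(oconsS (y ord0)); exact: lin_span_gen.
- rewrite /e oconsS; apply: lin_span_min (lin_span_submodule y) _ (e'y' i') => j.
  have sy := lin_span_submodule y.
  by apply: (submoduleB sy); [|apply: (submoduleZ sy)]; apply: lin_span_gen.
- by rewrite /e ocons0; apply: lin_span_gen.
Qed.

End Biorthogonal.

(** * Separation implies a direct limit of free summands *)

Section FiniteRank.
Variables (R : comUnitRingType) (M : lmodType R) (k : nat) (X : 'I_k -> M).

Definition finrank_image (p : 'I_k -> M) : Prop :=
  exists n (u : 'I_n -> M -> R) (y : 'I_n -> M),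
    (forall j, lform (u j)) /\ forall i, p i = \sum_(j < n) u j (X i) *: y j.

Lemma finrank_image0 : finrank_image (fun _ => 0).
Proof.
by exists 0, (fun _ _ => 0), (fun _ => 0); split=> [[]|i] //; rewrite big_ord0.
Qed.

Lemma finrank_image_rank1 u m : lform u -> finrank_image (fun i => u (X i) *: m).
Proof. by move=> lu; exists 1, (fun _ => u), (fun _ => m); split=> // i; rewrite big_ord1. Qed.

Lemma finrank_imageZ r p : finrank_image p -> finrank_image (fun i => r *: p i).
Proof.
case=> n [u [y [lu hp]]]; exists n, (fun j m => r * u j m), y.
split=> [j|i]; first exact: islin_mulf.
by rewrite hp scaler_sumr; apply: eq_bigr => j _; rewrite scalerA.
Qed.

Lemma finrank_imageD p q :
  finrank_image p -> finrank_image q -> finrank_image (fun i => p i + q i).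
Proof.
case=> n1 [u1 [y1 [lu1 hp]]] [n2 [u2 [y2 [lu2 hq]]]].
exists (n1 + n2), (fcat u1 u2), (fcat y1 y2); split=> [j|i].
  by rewrite /fcat; case: (split j).
rewrite big_split_ord hp hq; congr (_ + _); apply: eq_bigr => j _.
  by rewrite !fcat_lshift.
by rewrite !fcat_rshift.
Qed.

End FiniteRank.

Section LocalReduction.
Variables (R : comUnitRingType) (M : lmodType R).
Hypothesis loc : local_ring R.

Lemma local_unit_1sub (a : R) : a \isn't a GRing.unit -> 1 - a \is a GRing.unit.
Proof. by move=> ha; apply/negPn/negP => /loc/(_ ha); rewrite subrK unitr1. Qed.

Lemma not_unit_detected n (y : 'I_n -> M) : ~ unit_detected y ->
  exists2 c : 'I_n -> R, exists j, c j \is a GRing.unit &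
    forall u, lform u -> u (\sum_(i < n) c i *: y i) \isn't a GRing.unit.
Proof.
move=> /existsNP[c /not_implyP[hc /forallNP hu]]; exists c => // u lu.
by apply/negP => uc; apply: (hu u).
Qed.

(* Solving for [y j] in [z], [x = om x *: z + \sum_t b t x *: y (lift j t)] with
   [om = (c j)^-1 w j]; applying [om], locality makes [1 - om z] a unit, which
   expresses [om x] through the [b t x]. *)
Lemma local_drop_generator n (w : 'I_n.+1 -> M -> R) (y : 'I_n.+1 -> M)
    (c : 'I_n.+1 -> R) j :
  (forall t, lform (w t)) -> c j \is a GRing.unit ->
  (forall u, lform u -> u (\sum_(i < n.+1) c i *: y i) \isn't a GRing.unit) ->
  exists (w' : 'I_n -> M -> R) (y' : 'I_n -> M), (forall t, lform (w' t)) /\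
    forall x, x = \sum_(t < n.+1) w t x *: y t -> x = \sum_(t < n) w' t x *: y' t.
Proof.
move=> lw cj hz; set z := \sum_(i < n.+1) c i *: y i.
pose om m := (c j)^-1 * w j m.
have lom : lform om := islin_mulf _ (lw j).
have omz : 1 - om z \is a GRing.unit by apply/local_unit_1sub/hz.
pose b t m := w (lift j t) m - (c j)^-1 * c (lift j t) * w j m.
exists b, (fun t => y (lift j t) + ((1 - om z)^-1 * om (y (lift j t))) *: z).
split=> [t|x hx]; first by apply: islin_addf => //; apply/islin_oppf/islin_mulf.
have xE : x = om x *: z + \sum_(t < n) b t x *: y (lift j t).
  rewrite {1}hx (bigD1_ord j) //= /z (bigD1_ord j) //= scalerDr scalerA /om.
  rewrite [_ * _ * c j]mulrAC mulVr // mul1r -addrA; congr (_ + _).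
  rewrite scaler_sumr -big_split /=; apply: eq_bigr => t _.
  by rewrite scalerA /b scalerBl [_ * _ * c _]mulrAC addrC subrK.
have omxE : om x = (1 - om z)^-1 * \sum_(t < n) b t x * om (y (lift j t)).
  have := congr1 om xE; rewrite (islinD lom) (islinZ _ _ lom) (islin_sum _ _ lom) => h.
  apply: (@mulrI _ (1 - om z)) => //; rewrite mulrA mulrV // mul1r.
  by rewrite mulrBl mul1r {1}h [om x * om z]mulrC [om z * om x + _]addrC addrK.
rewrite {1}xE; under [RHS]eq_bigr do rewrite scalerDr scalerA.
rewrite big_split addrC; congr (_ + _).
rewrite -scaler_suml omxE mulr_sumr; congr (_ *: _); apply: eq_bigr => t _.
by rewrite mulrCA.
Qed.

Lemma finrank_fixed_unit_detected k (X : 'I_k -> M) : finrank_image X X ->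
  exists n (y : 'I_n -> M), unit_detected y /\ forall i, lin_span y (X i).
Proof.
case=> n [w [y [lw hX]]]; elim: n w y lw hX => [|n IH] w y lw hX.
  by exists 0, y; split=> [c [[]]|i] //; exists (fun j => w j (X i)).
have [hy|/not_unit_detected[c [j cj] hz]] := pselect (unit_detected y).
  by exists n.+1, y; split=> // i; exists (fun t => w t (X i)).
have [w' [y' [lw' hw']]] := local_drop_generator lw cj hz.
by apply: (IH w' y') => // i; apply: hw'.
Qed.

End LocalReduction.

Section TrivialExtension.
Variables (A : comNzRingType) (N : lmodType A).

Record triv_ext := TrivExt { te_base : A; te_mod : N }.
HB.instance Definition _ := gen_eqMixin triv_ext.
HB.instance Definition _ := gen_choiceMixin triv_ext.

Definition te_add a b := TrivExt (te_base a + te_base b) (te_mod a + te_mod b).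
Definition te_opp a := TrivExt (- te_base a) (- te_mod a).

Lemma te_addA : associative te_add.
Proof. by case=> ? ? [? ?] [? ?]; rewrite /te_add /= !addrA. Qed.
Lemma te_addC : commutative te_add.
Proof. by case=> ? ? [? ?]; rewrite /te_add /=; congr TrivExt; apply: addrC. Qed.
Lemma te_add0 : left_id (TrivExt 0 0) te_add.
Proof. by case=> ? ?; rewrite /te_add /= !add0r. Qed.
Lemma te_addN : left_inverse (TrivExt 0 0) te_opp te_add.
Proof. by case=> ? ?; rewrite /te_add /= !addNr. Qed.
HB.instance Definition _ := GRing.isZmodule.Build triv_ext te_addA te_addC te_add0 te_addN.

Definition te_mul a b :=
  TrivExt (te_base a * te_base b) (te_base a *: te_mod b + te_base b *: te_mod a).

Lemma te_mulA : associative te_mul.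
Proof.
case=> a m [b n] [c p]; rewrite /te_mul /=; congr TrivExt; first by rewrite mulrA.
by rewrite !scalerDr !scalerA !addrA [c * a]mulrC [c * b]mulrC.
Qed.
Lemma te_mulC : commutative te_mul.
Proof. by case=> a m [b n]; rewrite /te_mul /= mulrC addrC. Qed.
Lemma te_mul1 : left_id (TrivExt 1 0) te_mul.
Proof. by case=> a m; rewrite /te_mul /= mul1r scale1r scaler0 addr0. Qed.
Lemma te_mulDl : left_distributive te_mul te_add.
Proof.
case=> a m [b n] [c p]; rewrite /te_mul /te_add /=; congr TrivExt; first by rewrite mulrDl.
by rewrite scalerDl scalerDr addrACA.
Qed.
Lemma te_one_neq0 : TrivExt 1 0 != 0 :> triv_ext.
Proof. by apply/eqP => -[/eqP]; rewrite oner_eq0. Qed.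
HB.instance Definition _ := GRing.Zmodule_isComNzRing.Build triv_ext
  te_mulA te_mulC te_mul1 te_mulDl te_one_neq0.

Lemma te_mulE a b : a * b =
  TrivExt (te_base a * te_base b) (te_base a *: te_mod b + te_base b *: te_mod a).
Proof. by []. Qed.

Definition te_inj (a : A) : triv_ext := TrivExt a 0.
Lemma te_inj_is_zmod : zmod_morphism te_inj.
Proof. by move=> a b; rewrite /te_inj; congr TrivExt => /=; rewrite subr0. Qed.
HB.instance Definition _ := GRing.isZmodMorphism.Build A triv_ext te_inj te_inj_is_zmod.
Lemma te_inj_is_monoid : monoid_morphism te_inj.
Proof. by split=> // a b; rewrite /te_inj te_mulE /= !scaler0 addr0. Qed.
HB.instance Definition _ := GRing.isMonoidMorphism.Build A triv_ext te_inj te_inj_is_monoid.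

Definition te_nil (n : N) : triv_ext := TrivExt 0 n.
Lemma te_nil_is_zmod : zmod_morphism te_nil.
Proof. by move=> a b; rewrite /te_nil; congr TrivExt => /=; rewrite subr0. Qed.
HB.instance Definition _ := GRing.isZmodMorphism.Build N triv_ext te_nil te_nil_is_zmod.

Lemma te_injMnil a n : te_inj a * te_nil n = te_nil (a *: n).
Proof. by rewrite te_mulE /= mulr0 scaler0 addr0. Qed.

Lemma te_nilMinj n a : te_nil n * te_inj a = te_nil (a *: n).
Proof. by rewrite mulrC te_injMnil. Qed.

End TrivialExtension.

(* [coef_ring] is R + R^k (the symbols s_i, with s_i s_j = 0), [coef_tensor] is
   [coef_ring] (x)_R M = M + M^k, with s_i m = (delta_ij m)_j, and [univ_ring]
   adjoins [coef_tensor] as a square-zero ideal. *)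
Section UniversalRing.
Variables (R : comUnitRingType) (M : lmodType R) (k : nat).

Definition coef_ring := triv_ext ({ffun 'I_k -> R^o} : lmodType R).
Definition coef_tensor := (M * {ffun 'I_k -> M})%type.
HB.instance Definition _ := GRing.Zmodule.on coef_tensor.

Definition coef_scale (a : coef_ring) (x : coef_tensor) : coef_tensor :=
  (te_base a *: x.1, [ffun i => te_base a *: x.2 i + te_mod a i *: x.1]).

Lemma coef_scaleA a b x : coef_scale a (coef_scale b x) = coef_scale (a * b) x.
Proof.
case: a b x => [a c] [b d] [m p]; congr pair; first by rewrite /= scalerA.
by apply/ffunP => i; rewrite !ffunE /= scalerDr !scalerA scalerDl -addrA [c i * b]mulrC.
Qed.
Lemma coef_scale1 : left_id 1 coef_scale.
Proof.
case=> m p; congr pair; first by rewrite /= scale1r.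
by apply/ffunP => i; rewrite !ffunE scale1r scale0r addr0.
Qed.
Lemma coef_scaleDr : right_distributive coef_scale +%R.
Proof.
case=> a c [m p] [m' p']; congr pair; first by rewrite /= scalerDr.
by apply/ffunP => i; rewrite !ffunE /= ?ffunE !scalerDr addrACA.
Qed.
Lemma coef_scaleDl x : {morph coef_scale^~ x : a b / a + b}.
Proof.
case: x => m p [a c] [b d]; congr pair; first by rewrite /= scalerDl.
by apply/ffunP => i; rewrite !ffunE /= ?ffunE !scalerDl addrACA.
Qed.
HB.instance Definition _ := GRing.Zmodule_isLmodule.Build coef_ring coef_tensor
  coef_scaleA coef_scale1 coef_scaleDr coef_scaleDl.

Lemma coef_scaleE (a : coef_ring) (x : coef_tensor) :
  a *: x = (te_base a *: x.1, [ffun i => te_base a *: x.2 i + te_mod a i *: x.1]).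
Proof. by []. Qed.

Definition coef_pure (p : {ffun 'I_k -> M}) : coef_tensor := (0, p).
Lemma coef_pure_is_zmod : zmod_morphism coef_pure.
Proof. by move=> p q; rewrite /coef_pure; congr pair; rewrite /= subr0. Qed.
HB.instance Definition _ := GRing.isZmodMorphism.Build _ _ coef_pure coef_pure_is_zmod.

Lemma coef_scale_inj r m : (te_inj _ r : coef_ring) *: ((m, 0) : coef_tensor) = (r *: m, 0).
Proof.
by rewrite coef_scaleE; congr pair; apply/ffunP => i; rewrite !ffunE scaler0 scale0r addr0.
Qed.

Lemma coef_scale_nil (c : 'I_k -> R) m :
  (te_nil ([ffun i => c i] : {ffun 'I_k -> R^o}) : coef_ring) *: ((m, 0) : coef_tensor) =
  coef_pure [ffun i => c i *: m].
Proof.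
by rewrite coef_scaleE /= scale0r; congr pair; apply/ffunP => i; rewrite !ffunE scaler0 add0r.
Qed.

Definition univ_ring := triv_ext coef_tensor.

End UniversalRing.

Section UniversalIdeal.
Variables (R : comUnitRingType) (M : lmodType R) (k : nat) (X : 'I_k -> M).

(* The ideal generated by the elements [\sum_i u (X i) s_i] (u a form): its part in
   M^k is spanned by their products [(u (X i) *: m)_i] with the elements [m] of M. *)
Definition finrank_ideal_spec (b : univ_ring M k) : Prop :=
  [/\ te_base (te_base b) = 0, (te_mod b).1 = 0,
      exists2 u, lform u & te_mod (te_base b) = [ffun i => u (X i)]
    & finrank_image X (te_mod b).2].

Definition finrank_ideal : {pred univ_ring M k} := fun b => `[< finrank_ideal_spec b >].

Lemma finrank_idealP b : reflect (finrank_ideal_spec b) (b \in finrank_ideal).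
Proof. exact: asboolP. Qed.

Lemma finrank_ideal_closed : idealr_closed finrank_ideal.
Proof.
split.
- apply/finrank_idealP; split=> //; last first.
    by have := finrank_image0 X; congr finrank_image; apply: funext => i; rewrite ffunE.
  by exists (fun _ => 0); [split=> *; rewrite ?addr0 ?mulr0 | apply/ffunP => i; rewrite !ffunE].
- by apply/finrank_idealP => -[/= /eqP]; rewrite oner_eq0.
move=> [[r c] [m p]] [[r1 c1] [m1 p1]] [[r2 c2] [m2 p2]].
move=> /finrank_idealP[/= -> -> [u lu ->] fp1] /finrank_idealP[/= -> -> [u2 lu2 ->] fp2].
apply/finrank_idealP; split=> /=.
- by rewrite mulr0 addr0.
- by rewrite scaler0 scale0r !addr0.
- exists (fun x => r * u x + u2 x); first by apply: islin_addf => //; apply: islin_mulf.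
  by apply/ffunP => i; rewrite scale0r addr0 ffunDE ffunZE !ffunE.
have := finrank_imageD (finrank_imageD (finrank_imageZ r fp1) (finrank_image_rank1 X m lu)) fp2.
by congr finrank_image; apply: funext => i; rewrite !ffunDE !ffunE scaler0 scale0r !addr0 add0r.
Qed.

HB.instance Definition _ := isIdealr.Build _ finrank_ideal finrank_ideal_closed.

Definition univ_quot := {ideal_quot finrank_ideal}.

Lemma univ_quot_eq0 b : \pi_univ_quot b = 0 <-> finrank_ideal_spec b.
Proof.
have -> : (0 : univ_quot) = \pi 0 by rewrite rmorph0.
by rewrite (rwP eqP) -Quotient.idealrBE subr0; split=> /finrank_idealP.
Qed.

End UniversalIdeal.

Section SumDual.
Variables (R : comUnitRingType) (M : lmodType R) (S : comPzRingType).
Variable (fS : {rmorphism R -> S}).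

Definition sum_dual k (s : 'I_k -> S) (X : 'I_k -> M) : dual_family M S :=
  fun T g w => \sum_(i < k) g (s i) * w (X i).

Lemma sum_dual_nat k (s : 'I_k -> S) X : is_dual_nat fS (sum_dual s X).
Proof.
split; [|split] => [T g w1 w2 _ _|T g t w _|T T' g g' h w hg _].
- by rewrite -big_split; apply: eq_bigr => i _; rewrite mulrDr.
- by rewrite mulr_sumr; apply: eq_bigr => i _; rewrite mulrCA.
- by rewrite rmorph_sum; apply: eq_bigr => i _; rewrite rmorphM hg.
Qed.

Lemma zero_dual_nat : is_dual_nat (M := M) fS (fun _ _ _ => 0).
Proof. by split; [|split] => *; rewrite ?addr0 ?mulr0 ?rmorph0. Qed.

End SumDual.

Lemma sum_ffun_delta (R : pzRingType) (V : lmodType R) k (F : 'I_k -> V) :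
  \sum_(i < k) [ffun j => (i == j)%:R *: F i] = [ffun j => F j].
Proof.
apply/ffunP => j; rewrite sum_ffunE !ffunE (bigD1 j) //= !ffunE eqxx scale1r big1 ?addr0 //.
by move=> i /negbTE hi; rewrite !ffunE hi scale0r.
Qed.

Section UniversalQuotient.
Variables (R : comUnitRingType) (M : lmodType R) (k : nat) (X : 'I_k -> M).
Local Notation S := (univ_quot X).

Definition univ_scalar : {rmorphism R -> S} := \pi_S \o te_inj _ \o te_inj _.

Definition univ_coord (i : 'I_k) : S :=
  \pi_S (te_inj _ (te_nil [ffun j => (i == j)%:R])).

Definition univ_form (m : M) : S := \pi_S (te_nil ((m, 0) : coef_tensor M k)).

Lemma univ_form_lin : islin univ_scalar univ_form.
Proof.
split=> [x y|r x]; rewrite /univ_form; last by rewrite /= -rmorphM te_injMnil coef_scale_inj.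
have -> : ((x + y, 0) : coef_tensor M k) = (x, 0) + (y, 0) by congr (_, _); rewrite addr0.
by rewrite !raddfD.
Qed.

Lemma univ_coord_scalar u : lform u ->
  \sum_(i < k) univ_coord i * univ_scalar (u (X i)) = 0.
Proof.
move=> lu; under eq_bigr => i _.
  rewrite /univ_coord /= -!rmorphM te_nilMinj.
  have -> : u (X i) *: [ffun j => (i == j)%:R] = [ffun j => (i == j)%:R *: (u (X i) : R^o)].
    by apply/ffunP => j; rewrite ffunZE !ffunE; apply: mulrC.
over.
rewrite -!raddf_sum sum_ffun_delta; apply/univ_quot_eq0; split => //.
  by exists u; last by apply/ffunP => j; rewrite !ffunE.
by have := finrank_image0 X; congr finrank_image; apply: funext => i; rewrite ffunE.
Qed.

Lemma univ_coord_form :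
  \sum_(i < k) univ_coord i * univ_form (X i) = 0 -> finrank_image X X.
Proof.
under eq_bigr do rewrite /univ_coord /univ_form -rmorphM te_injMnil coef_scale_nil.
rewrite -!raddf_sum sum_ffun_delta => /univ_quot_eq0[_ _ _].
by congr finrank_image; apply: funext => i; rewrite /= ffunE.
Qed.

Lemma dually_separated_finrank : dual_dually_separated M -> finrank_image X X.
Proof.
move=> sep; apply: univ_coord_form.
exact: (sep _ _ _ _ (sum_dual_nat _ univ_coord X) (zero_dual_nat _ _)
  (fun u lu => univ_coord_scalar lu) _ idfun _ univ_form_lin).
Qed.

End UniversalQuotient.

Section SeparatedDirectLimit.
Variables (R : comUnitRingType) (M : lmodType R).
Hypotheses (loc : local_ring R) (sep : dual_dually_separated M).

Lemma dually_separated_fgfree_cover k (X : 'I_k -> M) :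
  exists L, fgfree_summand L /\ forall i, L (X i).
Proof.
have [n [y [hy Xy]]] := finrank_fixed_unit_detected loc (dually_separated_finrank X sep).
have [v [e [bve [ye _]]]] := unit_detected_biorthogonal hy.
exists (lin_span e); split; first exact: biorthogonal_fgfree_summand bve.
by move=> i; apply: lin_span_min (lin_span_submodule e) ye (Xy i).
Qed.

Lemma dually_separated_dirlim : dirlim_fgfree_summands M.
Proof.
split=> [L1 L2 [[_ [n1 [e1 [he1 _]]]] _] [[_ [n2 [e2 [he2 _]]]] _] | x].
  have [L [hL hX]] := dually_separated_fgfree_cover (fcat e1 e2).
  have sL : submodule L by case: hL => -[].
  exists L; split=> //; split=> [x /he1|x /he2] [c ->]; apply: submodule_sum => // i.
    by rewrite -(fcat_lshift e1 e2).
  by rewrite -(fcat_rshift e1 e2).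
have [L [hL hX]] := dually_separated_fgfree_cover (fun _ : 'I_1 => x).
by exists L; split=> //; apply: (hX ord0).
Qed.

End SeparatedDirectLimit.

(** * A direct limit of free summands is separated *)

Section FinitelyDetermined.
Variables (R : comUnitRingType) (M : lmodType R) (S : comPzRingType).
Variables (fS : {rmorphism R -> S}) (T : comPzRingType) (g : {rmorphism S -> T}).

Definition dual_point := {w : M -> T | islin (g \o fS) w}.

Definition fin_determined (F : dual_point -> T) : Prop :=
  exists s : seq M, forall w w' : dual_point, {in s, sval w =1 sval w'} -> F w = F w'.

Record fdfun := FDFun { fd_val : dual_point -> T; fd_valP : fin_determined fd_val }.
HB.instance Definition _ := gen_eqMixin fdfun.
HB.instance Definition _ := gen_choiceMixin fdfun.

Lemma fdfun_eq F G : fd_val F = fd_val G -> F = G.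
Proof.
by case: F G => [F hF] [G hG] /= eFG; subst G; congr FDFun; apply: Prop_irrelevance.
Qed.

Lemma fin_determined_cst t : fin_determined (fun _ => t).
Proof. by exists [::]. Qed.

Lemma fin_determined_op1 (op : T -> T) F :
  fin_determined F -> fin_determined (fun w => op (F w)).
Proof. by case=> s hs; exists s => w w' h; rewrite (hs w w'). Qed.

Lemma fin_determined_op2 (op : T -> T -> T) F G :
  fin_determined F -> fin_determined G -> fin_determined (fun w => op (F w) (G w)).
Proof.
case=> s hs [s' hs']; exists (s ++ s') => w w' h.
by rewrite (hs w w') ?(hs' w w') // => m hm; apply: h; rewrite mem_cat hm ?orbT.
Qed.

Lemma fin_determined_eval m : fin_determined (fun w : dual_point => sval w m).
Proof. by exists [:: m] => w w'; apply; rewrite inE. Qed.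

Definition fd_cst t := FDFun (fin_determined_cst t).
Definition fd_add F G := FDFun (fin_determined_op2 +%R (fd_valP F) (fd_valP G)).
Definition fd_opp F := FDFun (fin_determined_op1 -%R (fd_valP F)).
Definition fd_mul F G := FDFun (fin_determined_op2 *%R (fd_valP F) (fd_valP G)).

Lemma fd_addA : associative fd_add.
Proof. by move=> F G H; apply/fdfun_eq/funext => w /=; rewrite addrA. Qed.
Lemma fd_addC : commutative fd_add.
Proof. by move=> F G; apply/fdfun_eq/funext => w /=; rewrite addrC. Qed.
Lemma fd_add0 : left_id (fd_cst 0) fd_add.
Proof. by move=> F; apply/fdfun_eq/funext => w /=; rewrite add0r. Qed.
Lemma fd_addN : left_inverse (fd_cst 0) fd_opp fd_add.
Proof. by move=> F; apply/fdfun_eq/funext => w /=; rewrite addNr. Qed.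
HB.instance Definition _ := GRing.isZmodule.Build fdfun fd_addA fd_addC fd_add0 fd_addN.

Lemma fd_mulA : associative fd_mul.
Proof. by move=> F G H; apply/fdfun_eq/funext => w /=; rewrite mulrA. Qed.
Lemma fd_mulC : commutative fd_mul.
Proof. by move=> F G; apply/fdfun_eq/funext => w /=; rewrite mulrC. Qed.
Lemma fd_mul1 : left_id (fd_cst 1) fd_mul.
Proof. by move=> F; apply/fdfun_eq/funext => w /=; rewrite mul1r. Qed.
Lemma fd_mulDl : left_distributive fd_mul fd_add.
Proof. by move=> F G H; apply/fdfun_eq/funext => w /=; rewrite mulrDl. Qed.
HB.instance Definition _ := GRing.Zmodule_isComPzRing.Build fdfun
  fd_mulA fd_mulC fd_mul1 fd_mulDl.

Definition fd_scalar (s : S) : fdfun := fd_cst (g s).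
Lemma fd_scalar_is_zmod : zmod_morphism fd_scalar.
Proof. by move=> a b; apply/fdfun_eq/funext => w /=; rewrite rmorphB. Qed.
HB.instance Definition _ := GRing.isZmodMorphism.Build S fdfun fd_scalar fd_scalar_is_zmod.
Lemma fd_scalar_is_monoid : monoid_morphism fd_scalar.
Proof.
by split=> [|a b]; apply/fdfun_eq/funext => w /=; rewrite (rmorph1, rmorphM).
Qed.
HB.instance Definition _ := GRing.isMonoidMorphism.Build S fdfun fd_scalar fd_scalar_is_monoid.

Definition fd_at (w : dual_point) (F : fdfun) : T := fd_val F w.
Lemma fd_at_is_zmod w : zmod_morphism (fd_at w). Proof. by []. Qed.
HB.instance Definition _ w := GRing.isZmodMorphism.Build fdfun T (fd_at w) (fd_at_is_zmod w).
Lemma fd_at_is_monoid w : monoid_morphism (fd_at w). Proof. by []. Qed.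
HB.instance Definition _ w := GRing.isMonoidMorphism.Build fdfun T (fd_at w) (fd_at_is_monoid w).

Definition fd_generic (m : M) : fdfun := FDFun (fin_determined_eval m).

Lemma fd_generic_lin : islin (fd_scalar \o fS) fd_generic.
Proof. by split=> [x y|r x]; apply/fdfun_eq/funext => -[w [hwD hwZ]] /=. Qed.

(* Naturality along [fd_at w] makes [phi T g w] the value at [w] of the
   finitely determined function [phi _ fd_scalar fd_generic]. *)
Lemma dual_nat_fin_support (phi : dual_family M S) : is_dual_nat fS phi ->
  exists s : seq M, forall w w' : M -> T, islin (g \o fS) w -> islin (g \o fS) w' ->
    {in s, w =1 w'} -> phi T g w = phi T g w'.
Proof.
case=> _ [_ phi_nat].
have phi_at w (hw : islin (g \o fS) w) :
    phi T g w = fd_val (phi _ fd_scalar fd_generic) (exist _ w hw).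
  exact: (phi_nat _ _ fd_scalar g (fd_at (exist _ w hw)) _ (fun s => erefl) fd_generic_lin).
have [s hs] := fd_valP (phi _ fd_scalar fd_generic).
by exists s => w w' hw hw' ww'; rewrite (phi_at w hw) (phi_at w' hw'); apply: hs.
Qed.

End FinitelyDetermined.

Section SummandCoordinates.
Variables (R : comUnitRingType) (M : lmodType R) (L L' : M -> Prop).
Variables (n : nat) (e : 'I_n -> M).
Hypotheses (sL' : submodule L') (Le : forall x, L x <-> lin_span e x).
Hypothesis e_free : forall c : 'I_n -> R, \sum_(i < n) c i *: e i = 0 -> forall i, c i = 0.
Hypothesis LL'0 : forall x, L x -> L' x -> x = 0.
Hypothesis LL'_cover : forall x, exists y z, L y /\ L' z /\ x = y + z.

Lemma summand_coord_unique c c' z z' : L' z -> L' z' ->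
  \sum_(i < n) c i *: e i + z = \sum_(i < n) c' i *: e i + z' -> c =1 c'.
Proof.
move=> hz hz' eq_cz i; apply/eqP; rewrite -subr_eq0; apply/eqP; move: i; apply: e_free.
have dE : \sum_(i < n) (c i - c' i) *: e i = z' - z.
  under eq_bigr do rewrite scalerBl.
  by rewrite sumrB -(addrK z (\sum_(i < n) c i *: e i)) eq_cz addrAC [_ + z']addrC addrK.
by rewrite dE; apply: LL'0; [rewrite -dE; apply/Le; eexists | apply: submoduleB].
Qed.

Lemma summand_coords : exists v : 'I_n -> M -> R,
  (forall i, lform (v i)) /\ forall m, L m -> m = \sum_(i < n) v i m *: e i.
Proof.
have /choice[C hC] : forall m, exists c : 'I_n -> R,
    exists2 z, L' z & m = \sum_(i < n) c i *: e i + z.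
  by move=> m; have [y [z [/Le[c ->] [hz ->]]]] := LL'_cover m; exists c, z.
have C_unique m c z : L' z -> m = \sum_(i < n) c i *: e i + z -> C m =1 c.
  by move=> hz mE; have [z' hz' mE'] := hC m; apply: summand_coord_unique hz' hz _; rewrite -mE'.
exists (fun i m => C m i); split=> [i|m /Le[c mE]]; first split=> [x y|r x].
- have [[zx hzx xE] [zy hzy yE]] := (hC x, hC y).
  apply: (C_unique _ (fun i => C x i + C y i) (zx + zy)); first exact: submoduleD.
  rewrite {1}xE {1}yE addrACA -big_split; congr (_ + _).
  by apply: eq_bigr => j _; rewrite scalerDl.
- have [zx hzx xE] := hC x.
  apply: (C_unique _ (fun i => r * C x i) (r *: zx)); first exact: submoduleZ.
  by rewrite {1}xE scalerDr scaler_sumr; congr (_ + _); apply: eq_bigr => j _; rewrite scalerA.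
- rewrite {1}mE; apply: eq_bigr => i _; congr (_ *: _); symmetry.
  by apply: (C_unique m c 0); [case: sL' | rewrite addr0].
Qed.

End SummandCoordinates.

Lemma fgfree_summand_coords (R : comUnitRingType) (M : lmodType R) (L : M -> Prop) :
  fgfree_summand L -> exists n (v : 'I_n -> M -> R) (e : 'I_n -> M),
    (forall i, lform (v i)) /\ forall m, L m -> m = \sum_(i < n) v i m *: e i.
Proof.
case=> [[_ [n [e [Le e_free]]]] [_ [L' [sL' [LL'0 LL'_cover]]]]].
have [v hv] := summand_coords sL' Le e_free LL'0 LL'_cover.
by exists n, v, e.
Qed.

Section DualNatLinear.
Variables (R : comUnitRingType) (M : lmodType R) (S : comPzRingType).
Variables (fS : {rmorphism R -> S}) (T : comPzRingType) (g : {rmorphism S -> T}).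
Variable phi : dual_family M S.
Arguments phi : clear implicits.
Hypothesis phi_nat : is_dual_nat fS phi.

Lemma dual_nat0 : phi T g (fun _ => 0) = 0.
Proof.
have [_ [phiZ _]] := phi_nat.
have l0 : islin (g \o fS) (fun _ : M => 0 : T) by split=> *; rewrite ?addr0 ?mulr0.
by have := phiZ T g 0 _ l0; rewrite !mul0r.
Qed.

Lemma dual_nat_sum n (F : 'I_n -> M -> T) : (forall i, islin (g \o fS) (F i)) ->
  phi T g (fun m => \sum_(i < n) F i m) = \sum_(i < n) phi T g (F i).
Proof.
have [phiD _] := phi_nat; elim: n F => [|n IH] F hF.
  rewrite big_ord0 -[in RHS]dual_nat0; congr (phi T g).
  by apply: funext => m; rewrite big_ord0.
rewrite big_ord_recr /= -IH // -phiD //; last exact: islin_sumf.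
by congr (phi T g); apply: funext => m; rewrite big_ord_recr.
Qed.

Lemma dual_nat_coords (w : M -> T) n (v : 'I_n -> M -> R) (e : 'I_n -> M) :
  islin (g \o fS) w -> (forall i, lform (v i)) ->
  phi T g (fun m => w (\sum_(i < n) v i m *: e i)) =
  \sum_(i < n) w (e i) * g (phi S idfun (fS \o v i)).
Proof.
move=> hw lv; have [_ [phiZ phiN]] := phi_nat.
have lfv i : islin (idfun \o fS) (fS \o v i) := islin_rmorph fS (lv i).
have lgv i : islin (g \o fS) (g \o fS \o v i) := islin_rmorph (g \o fS) (lv i).
rewrite (_ : (fun m => _) = fun m => \sum_(i < n) w (e i) * (g \o fS \o v i) m); last first.
  by apply: funext => m; rewrite (islin_sum _ _ hw); apply: eq_bigr => i _; rewrite mulrC.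
rewrite dual_nat_sum => [|i]; last exact/islin_mulf/lgv.
apply: eq_bigr => i _; rewrite (phiZ _ _ _ _ (lgv i)); congr (_ * _).
exact: (phiN S T idfun g g (fS \o v i) (fun s => erefl) (lfv i)).
Qed.

End DualNatLinear.

Section DirectLimitSeparated.
Variables (R : comUnitRingType) (M : lmodType R).
Hypothesis dirlim : dirlim_fgfree_summands M.

Lemma dirlim_fgfree_cover_seq (s : seq M) :
  exists L, fgfree_summand L /\ {in s, forall m, L m}.
Proof.
have [directed cover] := dirlim; elim: s => [|m s [L [hL sL]]].
  by have [L [hL _]] := cover 0; exists L.
have [Lm [hLm Lm_m]] := cover m; have [L' [hL' [LmL' LL']]] := directed _ _ hLm hL.
by exists L'; split=> // x; rewrite inE => /orP[/eqP->|/sL]; [apply: LmL' | apply: LL'].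
Qed.

Lemma dirlim_dually_separated : dual_dually_separated M.
Proof.
move=> S fS phi psi phi_nat psi_nat phi_psi T g w hw.
have [s1 phi_s1] := dual_nat_fin_support g phi_nat.
have [s2 psi_s2] := dual_nat_fin_support g psi_nat.
have [L [hL Ls]] := dirlim_fgfree_cover_seq (s1 ++ s2).
have [n [v [e [lv vE]]]] := fgfree_summand_coords hL.
pose wL m := w (\sum_(i < n) v i m *: e i).
have hwL : islin (g \o fS) wL.
  split=> [x y|r x]; rewrite /wL; [rewrite -(islinD hw) | rewrite -(islinZ _ _ hw)]; congr w.
    by rewrite -big_split; apply: eq_bigr => i _; rewrite (islinD (lv i)) scalerDl.
  by rewrite scaler_sumr; apply: eq_bigr => i _; rewrite (islinZ _ _ (lv i)) scalerA.
have wL_s : {in s1 ++ s2, w =1 wL} by move=> m /Ls Lm; rewrite /wL -vE.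
rewrite (phi_s1 w wL) ?(psi_s2 w wL) // => [|m hm|m hm]; last 2 first.
- by apply: wL_s; rewrite mem_cat hm orbT.
- by apply: wL_s; rewrite mem_cat hm.
rewrite /wL (dual_nat_coords phi_nat e hw lv) (dual_nat_coords psi_nat e hw lv).
by apply: eq_bigr => i _; rewrite phi_psi.
Qed.

End DirectLimitSeparated.

Theorem corollary6p19 (R : comUnitRingType) (M : lmodType R) :
  local_ring R ->
  (dual_dually_separated M <-> dirlim_fgfree_summands M).
Proof.
move=> loc; split=> [sep|]; first exact: dually_separated_dirlim loc sep.
exact: dirlim_dually_separated.
Qed.
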